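(* Let $r\in(0,1)$ and $k\geq1$ an integer. Let $W$ be a positive random variable (cascade multiplier) with $\log W=a+bN$, $N\sim\mathrm{Poisson}(\lambda)$, where $a\in\mathbb{R}$, $b<0$, $\lambda>0$. Define the scaling exponents $\zeta_p$ by $\mathbb{E}[W^p]=r^{\zeta_p}$ and $\delta_p=\zeta_{p+k}-\zeta_p$. Then, with $\beta=e^{bk}\in(0,1)$, the limit $\delta_\infty=\lim_{p\to\infty}\delta_p$ exists and is finite and $$\delta_{p+k}=(1-\beta)\delta_\infty+\beta\delta_p\qquad\text{for all }p\in k\mathbb{N}_0=\{0,k,2k,\dots\},$$ i.e.\ the hierarchical symmetry axiom A1 holds. *)

From HB Require Import structures.
From mathcomp Require Import all_boot all_order all_algebra.
From mathcomp Require Import all_classical all_reals all_analysis.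
Set Implicit Arguments. Unset Strict Implicit. Unset Printing Implicit Defensive.
Import Order.TTheory GRing.Theory Num.Theory.

From HB Require Import structures.
From mathcomp Require Import all_boot all_order all_algebra.
From mathcomp Require Import all_classical all_reals all_analysis.
From mathcomp Require Import ring.
Set Implicit Arguments. Unset Strict Implicit. Unset Printing Implicit Defensive.
Import Order.TTheory GRing.Theory Num.Theory.
Import numFieldNormedType.Exports.
Local Open Scope classical_set_scope.
Local Open Scope ring_scope.

(* The Poisson generating function E[q^N] = exp(lambda (q - 1)) gives
   E[W^p] = exp(p a + lambda (e^(b p) - 1)), hence zeta_p is affine in p
   plus a multiple of e^(b p).  So delta_p = delta_inf + C e^(b p) with
   e^(b p) -> 0, and shifting p by k multiplies the transient C e^(b p)
   by beta = e^(b k), which is the hierarchical relation. *)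

Section poisson_generating_function.
Context d (T : measurableType d) (R : realType) (P : probability T R).
Variables (lambda : R) (N : T -> nat).
Hypotheses (lambda_gt0 : 0 < lambda) (mN : measurable_fun setT N).
Hypothesis N_poisson : forall A : set nat, measurable A ->
  P (N @^-1` A) = poisson_prob lambda 0%N A.

Lemma poisson_preimage1 n : P (N @^-1` [set n]) = (poisson_pmf lambda n)%:E.
Proof.
by rewrite N_poisson // /poisson_prob lambda_gt0 esum_set1 // lee_fin poisson_pmf_ge0.
Qed.

Lemma integral_poisson_pow (q : R) : 0 <= q ->
  (\int[P]_x (q ^+ N x)%:E = (expR (lambda * (q - 1)))%:E)%E.
Proof.
move=> q_ge0.
pose F n := N @^-1` [set n].
have mF n : measurable (F n) by rewrite -[F n]setTI; apply: mN.
have UF : \bigcup_n F n = setT by apply/seteqP; split => x // _; exists (N x).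
rewrite -UF ge0_integral_bigcup //; first last.
- by move=> i j _ _ [x [/= <- <-]].
- by move=> x _; rewrite lee_fin exprn_ge0.
- rewrite UF; apply/measurable_realfun.measurable_EFinP.
  exact: (measurableT_comp (f := fun n : nat => q ^+ n)).
transitivity (\sum_(n <oo) (expR (- lambda) * ((lambda * q) ^+ n / n`!%:R))%:E)%E.
  apply: eq_eseriesr => n _.
  under eq_integral => x /[!inE] /= -> do [].
  rewrite integral_cst // [X in (_ * X)%E]poisson_preimage1 -EFinM /poisson_pmf lambda_gt0.
  by congr EFin; rewrite exprMn; field.
under eq_eseriesr do rewrite EFinM.
rewrite nneseriesZl /=; last first.
  by move=> n _; rewrite lee_fin divr_ge0 // exprn_ge0 // mulr_ge0 // ltW.
rewrite mulrBr mulr1 addrC expRD EFinM; congr (_ * _)%E.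
rewrite expRE -EFin_lim; last first.
  rewrite /pseries /=; under eq_fun do rewrite mulrC.
  exact: is_cvg_series_exp_coeff.
apply/congr_lim/funext => n /=; rewrite /pseries /= /series /= -sumEFin.
by under eq_bigr do rewrite mulrC.
Qed.

Lemma integral_powR_expR_poisson (a b : R) (W : T -> R) :
  (forall x, 0 < W x) -> (forall x, ln (W x) = a + b * (N x)%:R) -> forall p,
  (\int[P]_x (W x `^ p)%:E = (expR (p * a + lambda * (expR (b * p) - 1)))%:E)%E.
Proof.
move=> W_gt0 lnW p.
have exponentE m : p * (a + b * m) = p * a + m * (b * p) by ring.
under eq_integral => x _.
  rewrite /powR gt_eqF // lnW exponentE expRD expRM_natl EFinM.
  over.
rewrite ge0_integralZl_EFin ?expR_ge0 //; last first.
  apply/measurable_realfun.measurable_EFinP.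
  exact: (measurableT_comp (f := fun n : nat => expR (b * p) ^+ n)).
by rewrite integral_poisson_pow ?expR_ge0 // -EFinM -expRD.
Qed.

End poisson_generating_function.

Lemma powR_expR_exponent (R : realType) (r z y : R) :
  0 < r -> r != 1 -> r `^ z = expR y -> z = y / ln r.
Proof.
move=> r_gt0 r_neq1 /(congr1 (@ln R)); rewrite ln_powR expRK => <-.
by rewrite mulfK // ln_eq0.
Qed.

Lemma lt0_cvgr_expRM (R : realType) (b : R) : b < 0 ->
  expR (b * x) @[x --> +oo] --> 0.
Proof.
move=> b_lt0.
have -> : (fun x => expR (b * x)) = (fun x => expR (- x)) \o (fun x => - b * x).
  by apply/funext => x /=; rewrite mulNr opprK.
apply: (cvg_comp _ _ _ (@cvgr_expR R)).
by apply: gt0_cvgMry; [rewrite oppr_gt0 | exact: cvg_id].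
Qed.

Theorem mainTheorem6 (d : measure_display) (T : measurableType d) (R : realType)
  (P : probability T R) (r : R) (k : nat) (a b lambda : R)
  (N : T -> nat) (W : T -> R) (zeta : R -> R) :
  0 < r < 1 -> (0 < k)%N -> b < 0 -> 0 < lambda ->
  measurable_fun setT N ->
  (forall A : set nat, measurable A ->
     P (N @^-1` A) = poisson_prob lambda 0%N A) ->
  (forall x, 0 < W x) ->
  (forall x, ln (W x) = a + b * (N x)%:R) ->
  (forall p : R, (\int[P]_x ((W x) `^ p)%:E)%E = (r `^ zeta p)%:E) ->
  let delta := fun p : R => zeta (p + k%:R) - zeta p in
  let beta := expR (b * k%:R) in
  0 < beta < 1 /\
  exists delta_inf : R,
    delta p @[p --> +oo] --> delta_inf /\
    forall n : nat,
      delta ((n * k)%:R + k%:R) = (1 - beta) * delta_inf + beta * delta (n * k)%:R.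
Proof.
move=> /andP[r_gt0 r_lt1] k_gt0 b_lt0 lambda_gt0 mN N_poisson W_gt0 lnW moments delta beta.
have lnr_neq0 : ln r != 0 by rewrite lt_eqF // ln_lt0 // r_gt0 r_lt1.
have zetaE p : zeta p = (p * a + lambda * (expR (b * p) - 1)) / ln r.
  apply: powR_expR_exponent; rewrite ?lt_eqF //.
  apply: EFin_inj; rewrite -moments.
  exact: (integral_powR_expR_poisson lambda_gt0 mN N_poisson W_gt0 lnW).
pose delta_inf := k%:R * a / ln r.
pose C := lambda * (beta - 1) / ln r.
have deltaE p : delta p = delta_inf + C * expR (b * p).
  by rewrite /delta !zetaE /delta_inf /C /beta [b * (_ + _)]mulrDr expRD; field.
split; first by rewrite expR_gt0 expR_lt1 pmulr_llt0 ?ltr0n.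
exists delta_inf; split.
  rewrite (funext deltaE) -[X in _ --> X]addr0 -(mulr0 C).
  by apply: cvgD; [exact: cvg_cst | apply: cvgM; [exact: cvg_cst | exact: lt0_cvgr_expRM]].
by move=> n; rewrite !deltaE [b * (_ + _)]mulrDr expRD -/beta; ring.
Qed.
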